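(* Let $H\ge1$, $d_0=d_x$, $d_{H+1}=d_y$, and widths $d_1,\dots,d_H$ with $d_j\ge\min\{d_x,d_y\}$ for all $j$. For $W_j\in\mathbb{R}^{d_j\times d_{j-1}}$, $j\in[H+1]$, write $W_{i:j}=W_iW_{i-1}\cdots W_j$ for $i\ge j$ and $W_{j-1:j}=I$. Let $\ell_0:\mathbb{R}^{d_y\times d_x}\to\mathbb{R}$ be differentiable and define $\ell((W_j)_{j=1}^{H+1})=\ell_0(W_{H+1:1})$. Let $(\hat W_j)_{j=1}^{H+1}$ be any critical point of $\ell$. Then: 1. If $\nabla\ell_0(\hat W_{H+1:1})\ne0$, then $(\hat W_j)_{j=1}^{H+1}$ is a saddle point of $\ell$. 2. If $\nabla\ell_0(\hat W_{H+1:1})=0$, then (a) $(\hat W_j)_{j=1}^{H+1}$ is a local minimum (resp. maximum) of $\ell$ if $\hat W_{H+1:1}$ is a local minimum (resp. maximum) of $\ell_0$; and (b) $(\hat W_j)_{j=1}^{H+1}$ is a global minimum (resp. maximum) of $\ell$ if and only if $\hat W_{H+1:1}$ is a global minimum (resp. maximum) of $\ell_0$. 3. If there exists $j^*\in[H+1]$ such that $\hat W_{H+1:j^*+1}$ has full row rank and $\hat W_{j^*-1:1}$ has full column rank, then $\nabla\ell_0(\hat W_{H+1:1})=0$ (so 2(a) and 2(b) hold), and moreover (a) $\hat W_{H+1:1}$ is a local minimum (resp. maximum) of $\ell_0$ if $(\hat W_j)_{j=1}^{H+1}$ is a local minimum (resp. maximum) of $\ell$.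
   Context: $[a]=\{1,\dots,a\}$. A critical point of $\ell$ is a point where all partial derivatives $\partial\ell/\partial W_j$ vanish. A saddle point is a critical point that is neither a local minimum nor a local maximum. *)

From HB Require Import structures.
From mathcomp Require Import all_boot all_order all_algebra.
From mathcomp Require Import all_classical all_reals all_analysis.
Set Implicit Arguments. Unset Strict Implicit. Unset Printing Implicit Defensive.
Import Order.TTheory GRing.Theory Num.Theory.
Import numFieldNormedType.Exports.
Local Open Scope ring_scope.
Local Open Scope classical_set_scope.

(* Widths are a function d : nat -> nat with d 0 = d_x and
   d (H+1) = d_y.  The paper's weight W_{k+1} (k = 0..H), of size
   d_{k+1} x d_k, is stored at index k : 'I_(H.+1). *)

Section DeepLinear.
Variables (R : realType) (H : nat) (d : nat -> nat).

Definition params := prod_topology (fun j : 'I_(H.+1) => 'M[R]_(d j.+1, d j)).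

Definition extW (W : params) (k : nat) : 'M[R]_(d k.+1, d k) :=
  (if (k < H.+1)%N as b return (k < H.+1)%N = b -> 'M[R]_(d k.+1, d k)
   then fun h => W (Ordinal h) else fun _ => 0) (erefl (k < H.+1)%N).

(* prodTo W j i = (paper) W_{i:j+1} = W_i W_{i-1} ... W_{j+1}  for i >= j,
   of size d_i x d_j; prodTo W j j = identity (paper: W_{j:j+1} = I). *)
Fixpoint prodTo (W : params) (j i : nat) : 'M[R]_(d i, d j) :=
  match i with
  | 0 => pid_mx (d 0)
  | i'.+1 => if (j <= i')%N then extW W i' *m prodTo W j i' else pid_mx (d i'.+1)
  end.

Definition fullprod (W : params) : 'M[R]_(d H.+1, d 0) := prodTo W 0 H.+1.

Definition ell (ell0 : 'M[R]_(d H.+1, d 0) -> R) (W : params) : R :=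
  ell0 (fullprod W).

End DeepLinear.

Section Extrema.
Variables (T : topologicalType) (R : realType) (f : T -> R) (x : T).
Definition local_min := \forall y \near x, f x <= f y.
Definition local_max := \forall y \near x, f y <= f x.
Definition global_min := forall y, f x <= f y.
Definition global_max := forall y, f y <= f x.
End Extrema.

Definition critical_point (R : realType) (H : nat) (d : nat -> nat)
  (f : params R H d -> R) (W : params R H d) : Prop :=
  forall j : 'I_(H.+1),
    forall V : 'M[R]_(d j.+1, d j),
      'd (fun X : 'M[R]_(d j.+1, d j) => f (@dfwith _ (fun k : 'I_(H.+1) => 'M[R]_(d k.+1, d k)) W j X)) (W j) V = 0.

Definition saddle_point (R : realType) (H : nat) (d : nat -> nat)
  (f : params R H d -> R) (W : params R H d) : Prop :=
  critical_point f W /\ ~ local_min f W /\ ~ local_max f W.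

Definition grad_zero (R : realType) (m n : nat) (g : 'M[R]_(m, n) -> R)
  (M : 'M[R]_(m, n)) : Prop := forall V : 'M[R]_(m, n), 'd g M V = 0.

(* Fix a local minimum of l with end-to-end product M and let S ([min_fiber M])
   be the set of local minima of l with product M.  Perturbing a single factor
   W_j of a point of S inside the kernel of E |-> W_{H+1:j+1} E W_{j-1:1} keeps
   the product, hence the value, so small perturbations stay in S; and at every
   point of S the derivative in W_j gives W_{H+1:j+1}^T grad l0(M) W_{j-1:1}^T = 0.
   If d_y <= d_x, descending induction on j shows grad l0(M) W_{j:1}^T = 0 on S:
   either W_{H+1:j+1} has full column rank, hence (as d_y <= d_j) a right
   inverse, and the derivative in W_j suffices; or it kills some w <> 0, and
   comparing the induction hypothesis at W and at W with W_j replaced by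
   W_j + t w y gives grad l0(M) (x y W_{j-1:1})^T = 0 for all x, y.  At j = 0
   this is grad l0(M) = 0; the case d_x < d_y is the mirror image, and local
   maxima are local minima of -l0.  For parts 2 and 3, the product map is
   continuous and onto, and if A = W_{H+1:j*+1} and B = W_{j*-1:1} have
   one-sided inverses A^+ and B^+, replacing W_{j*} by W_{j*} + A^+ (N - M) B^+
   is a continuous local section of it. *)

From HB Require Import structures.
From mathcomp Require Import all_boot all_order all_algebra.
From mathcomp Require Import all_classical all_reals all_analysis.
Import Order.TTheory GRing.Theory Num.Theory.
Import numFieldNormedType.Exports.
Local Open Scope ring_scope.
Local Open Scope classical_set_scope.
Set Implicit Arguments. Unset Strict Implicit. Unset Printing Implicit Defensive.

Section Products.
Variables (R : realType) (H : nat) (d : nat -> nat).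
Implicit Types W : params R H d.

Lemma extW_lt W k (hk : (k < H.+1)%N) : extW W k = W (Ordinal hk).
Proof.
rewrite /extW; move: (erefl (k < H.+1)%N).
rewrite {2 3}hk => hk'.
by rewrite (eq_irrelevance hk' hk).
Qed.

Lemma extW_ge W k : (H.+1 <= k)%N -> extW W k = 0.
Proof.
rewrite leqNgt /extW => /negPf hk; move: (erefl (k < H.+1)%N).
by rewrite {2 3}hk.
Qed.

Lemma extW_ord W (k : 'I_H.+1) : extW W k = W k.
Proof. by case: k => k hk; rewrite (extW_lt W hk). Qed.

Lemma dfwith_id W (k : 'I_H.+1) : dfwith W k (W k) = W.
Proof. by apply: functional_extensionality_dep => j; case: dfwithP => // ->. Qed.

Lemma extW_dfwith W (k : 'I_H.+1) X : extW (dfwith W k X) k = X.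
Proof. by rewrite extW_ord dfwithin. Qed.

Lemma extW_dfwith_out W (k : 'I_H.+1) X (i : nat) : i != k ->
  extW (dfwith W k X) i = extW W i.
Proof.
move=> ik; have [hi|hi] := ltnP i H.+1; last by rewrite !extW_ge.
rewrite !(extW_lt _ hi) dfwithout //.
by apply: contraNneq ik => ->.
Qed.

Lemma prodTo_id W j : prodTo W j j = 1%:M.
Proof. by case: j => [|j] /=; rewrite ?ltnn pid_mx_1. Qed.

Lemma prodToS W j i : (j <= i)%N -> prodTo W j i.+1 = extW W i *m prodTo W j i.
Proof. by move=> /= ->. Qed.

Lemma prodTo_split W j k i : (j <= k <= i)%N ->
  prodTo W j i = prodTo W k i *m prodTo W j k.
Proof.
case/andP=> jk; elim: i => [|i IH].
  by rewrite leqn0 => /eqP->; rewrite prodTo_id mul1mx.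
rewrite leq_eqVlt => /predU1P[<-|ki]; first by rewrite prodTo_id mul1mx.
by rewrite !prodToS ?(leq_trans jk) // IH // mulmxA.
Qed.

Lemma prodToSl W j i : (j < i)%N -> prodTo W j i = prodTo W j.+1 i *m extW W j.
Proof.
by move=> ji; rewrite (@prodTo_split W j j.+1 i) ?leqnSn // prodToS // prodTo_id mulmx1.
Qed.

Lemma eq_prodTo W W' j i : (forall k, (j <= k < i)%N -> extW W k = extW W' k) ->
  prodTo W j i = prodTo W' j i.
Proof.
elim: i => [|i IH] eqW //=; case: ifP => // ji.
by rewrite eqW ?ji ?ltnSn // IH // => k /andP[jk ki]; rewrite eqW // jk ltnW.
Qed.

Lemma prodTo_dfwith_out W (k : 'I_H.+1) X j i : (i <= k)%N || (k < j)%N ->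
  prodTo (dfwith W k X) j i = prodTo W j i.
Proof.
move=> out; apply: eq_prodTo => l /andP[jl li]; rewrite extW_dfwith_out //.
by apply: contraTneq out => <-; rewrite negb_or -ltnNge -leqNgt li jl.
Qed.

Lemma prodTo_dfwith_lo W (k : 'I_H.+1) X j : (j <= k)%N ->
  prodTo (dfwith W k X) j k.+1 = X *m prodTo W j k.
Proof. by move=> jk; rewrite prodToS // extW_dfwith prodTo_dfwith_out ?leqnn. Qed.

Lemma prodTo_dfwith_hi W (k : 'I_H.+1) X :
  prodTo (dfwith W k X) k H.+1 = prodTo W k.+1 H.+1 *m X.
Proof. by rewrite prodToSl // extW_dfwith prodTo_dfwith_out // ltnSn orbT. Qed.

Lemma fullprod_dfwith W (k : 'I_H.+1) X :
  fullprod (dfwith W k X) = prodTo W k.+1 H.+1 *m X *m prodTo W 0 k.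
Proof.
rewrite /fullprod (@prodTo_split _ 0 k.+1) ?ltn_ord // prodTo_dfwith_lo //.
by rewrite prodTo_dfwith_out ?ltnSn ?orbT // mulmxA.
Qed.

Lemma fullprod_split W (k : 'I_H.+1) :
  fullprod W = prodTo W k.+1 H.+1 *m W k *m prodTo W 0 k.
Proof. by rewrite -{1}(dfwith_id W k) fullprod_dfwith. Qed.

End Products.

Section MatrixCalculus.
Variable K : numFieldType.

Lemma mx_continuous_at (T : topologicalType) m n (f : T -> 'M[K]_(m, n)) x :
  (forall i j, {for x, continuous (fun y => f y i j)}) -> {for x, continuous f}.
Proof.
move=> cf A /nbhs_ballP[e e0 fxA].
have : \forall y \near x, forall ij : 'I_m * 'I_n, ball (f x ij.1 ij.2) e (f y ij.1 ij.2).
  by apply: filter_forall => -[i j] /=; exact: (cvg_ball (cf i j) e0).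
by apply: filterS => y fxy; apply: fxA; split => // i j; exact: (fxy (i, j)).
Qed.

Lemma mulmx_continuous_at (T : topologicalType) m n p (f : T -> 'M[K]_(m, n))
    (g : T -> 'M[K]_(n, p)) x :
  {for x, continuous f} -> {for x, continuous g} ->
  {for x, continuous (fun y => f y *m g y)}.
Proof.
move=> cf cg; apply: mx_continuous_at => i j.
rewrite /prop_for /continuous_at mxE; under eq_fun do rewrite mxE.
apply: cvg_big => [|k _]; first exact: add_continuous.
apply: cvgM; first exact: (continuous_comp cf (@coord_continuous K m n i k (f x))).
exact: (continuous_comp cg (@coord_continuous K n p k j (g x))).
Qed.

Section MulmxComp.
Variables (U : normedModType K) (m n p q : nat) (f : 'M[K]_(m, q) -> U).
Variables (A : 'M[K]_(m, n)) (B : 'M[K]_(p, q)) (X : 'M[K]_(n, p)).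
Hypothesis df : differentiable f (A *m X *m B).

Let L : {linear 'M[K]_(n, p) -> 'M[K]_(m, q)} := mulmxr B \o mulmx A.

Let L_continuous : continuous L.
Proof.
move=> Y; apply: mulmx_continuous_at; last exact: cst_continuous.
by apply: mulmx_continuous_at; [exact: cst_continuous | exact: cvg_id].
Qed.

Let dL : differentiable L X := linear_differentiable X L_continuous.

Lemma differentiable_mulmx_comp : differentiable (fun Y => f (A *m Y *m B)) X.
Proof. exact: differentiable_comp dL df. Qed.

Lemma diff_mulmx_comp V :
  'd (fun Y => f (A *m Y *m B)) X V = 'd f (A *m X *m B) (A *m V *m B).
Proof. by rewrite (diff_comp dL df) /= (diff_lin X L_continuous). Qed.

End MulmxComp.

End MatrixCalculus.

Section ParamsContinuity.
Variables (R : realType) (H : nat) (d : nat -> nat).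
Implicit Types W : params R H d.

Lemma extW_continuous k : continuous (fun W : params R H d => extW W k).
Proof.
have [hk|hk] := ltnP k H.+1.
  have -> : (fun W : params R H d => extW W k) = fun W => W (Ordinal hk).
    by apply: funext => W; rewrite extW_lt.
  exact: (@proj_continuous _ _ (Ordinal hk)).
have -> : (fun W : params R H d => extW W k) = fun=> 0.
  by apply: funext => W; rewrite extW_ge.
exact: cst_continuous.
Qed.

Lemma prodTo_continuous j i : continuous (fun W : params R H d => prodTo W j i).
Proof.
elim: i => [|i IH]; first exact: cst_continuous.
have [ji|ij] := leqP j i; last first.
  have -> : (fun W : params R H d => prodTo W j i.+1) = fun=> pid_mx (d i.+1).
    by apply: funext => W /=; rewrite leqNgt ij.
  exact: cst_continuous.
have -> : (fun W : params R H d => prodTo W j i.+1) =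
          fun W => extW W i *m prodTo W j i.
  by apply: funext => W; rewrite prodToS.
by move=> W; apply: mulmx_continuous_at; [exact: extW_continuous | exact: IH].
Qed.

Lemma cvg_dfwith (T : Type) (F : set_system T) (FF : Filter F) W (k : 'I_H.+1)
    (g : T -> 'M[R]_(d k.+1, d k)) :
  g x @[x --> F] --> W k -> (dfwith W k (g x) : params R H d) @[x --> F] --> W.
Proof.
move=> g_cvg; suff : (dfwith W k (g x) : params R H d) @[x --> F] -->
                     (dfwith W k (W k) : params R H d) by rewrite dfwith_id.
by apply: (continuous_cvg _ _ g_cvg); exact: dfwith_continuous.
Qed.

End ParamsContinuity.

Section Differentials.
Variable R : realType.

Lemma local_min_comp (T U : topologicalType) (f : T -> R) (g : U -> T) u :
  {for u, continuous g} -> local_min f (g u) -> local_min (f \o g) u.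
Proof. by move=> cg; apply: cg. Qed.

Lemma diff_local_min (V : normedModType R) (f : V -> R) x v :
  (forall y, differentiable f y) -> local_min f x -> 'd f x v = 0.
Proof.
move=> df fmin; pose g t := f (x + t *: v).
have line_cvg : x + t *: v @[t --> (0 : R)] --> x + 0 *: v.
  exact: cvgD (cvg_cst x) (cvgZl (@cvg_id _ _)).
have /nbhs_ballP[e e0 gmin] : local_min g 0.
  by apply: (local_min_comp line_cvg); rewrite scale0r addr0.
have dg t : derivable g t 1.
  apply/diff_derivable/differentiable_comp; last exact: df.
  exact/differentiableD/differentiableZl.
have g0 : is_derive (0 : R) 1 g 0.
  apply: (@derive1_at_min _ g (- e) e) => [|t _|//|t].
  - by rewrite (@le_trans _ _ 0) ?oppr_le0 ?ltW.
  - exact: dg.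
  - by rewrite in_itv /= oppr_lt0 e0.
  - rewrite in_itv /= => /andP[et te]; apply: gmin.
    by rewrite /ball /= sub0r normrN ltr_norml et te.
rewrite -deriveE // -(@derive_val _ _ _ _ _ _ _ g0) /derive.
suff -> : (fun h : R => h^-1 *: ((g \o shift 0) h%:A - g 0)) =
          (fun h => h^-1 *: ((f \o shift x) (h *: v) - f x)) by [].
apply: funext => h /=.
by rewrite /g /shift scale0r !addr0 -[h%:A]/(h * 1) mulr1 (addrC x).
Qed.

End Differentials.

Lemma rank1_linear_eq0 (K : numFieldType) m n (f : {linear 'M[K]_(m, n) -> K}) :
  (forall (x : 'cV[K]_m) (y : 'rV[K]_n), f (x *m y) = 0) -> forall Z, f Z = 0.
Proof.
move=> f0 Z; rewrite (matrix_sum_delta Z) linear_sum big1 // => i _.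
rewrite linear_sum big1 // => j _.
by rewrite linearZ /= -(@mul_delta_mx _ m 1 n ord0) f0 scaler0.
Qed.

Section OneSidedInverses.
Variable F : fieldType.

Lemma left_kernel_neq0 m n (A : 'M[F]_(m, n)) :
  ~~ row_free A -> exists2 u : 'rV_m, u != 0 & u *m A = 0.
Proof. by rewrite -kermx_eq0 => /rowV0Pn[u /sub_kermxP uA u0]; exists u. Qed.

Lemma right_kernel_neq0 m n (A : 'M[F]_(m, n)) :
  ~~ row_full A -> exists2 w : 'cV_n, w != 0 & A *m w = 0.
Proof.
rewrite /row_full -mxrank_tr -[\rank _ == _]/(row_free A^T).
case/left_kernel_neq0 => u u0 uA; exists u^T; first by rewrite trmx_eq0.
by rewrite -[A]trmxK -trmx_mul uA trmx0.
Qed.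

Lemma rV_neq0_rinv n (v : 'rV[F]_n) : v != 0 -> exists vr, v *m vr = 1%:M.
Proof. by move=> v0; apply/row_freeP; rewrite /row_free rank_rV v0. Qed.

Lemma cV_neq0_linv n (w : 'cV[F]_n) : w != 0 -> exists wl, wl *m w = 1%:M.
Proof.
by move=> w0; apply/row_fullP; rewrite /row_full -mxrank_tr rank_rV trmx_eq0 w0.
Qed.

End OneSidedInverses.

Section PartialDerivatives.
Variables (R : realType) (H : nat) (d : nat -> nat).
Variable ell0 : 'M[R]_(d H.+1, d 0) -> R.
Hypothesis ell0_diff : forall M, differentiable ell0 M.
Implicit Types W : params R H d.

Lemma ell_dfwith W (k : 'I_H.+1) :
  (fun X => ell ell0 (dfwith W k X)) =
  (fun X => ell0 (prodTo W k.+1 H.+1 *m X *m prodTo W 0 k)).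
Proof. by apply: funext => X; rewrite /ell fullprod_dfwith. Qed.

Lemma diff_ell_dfwith W (k : 'I_H.+1) V :
  'd (fun X => ell ell0 (dfwith W k X)) (W k) V =
  'd ell0 (fullprod W) (prodTo W k.+1 H.+1 *m V *m prodTo W 0 k).
Proof.
by rewrite ell_dfwith (fullprod_split W k) diff_mulmx_comp.
Qed.

Lemma local_min_diff_ell W (k : 'I_H.+1) V : local_min (ell ell0) W ->
  'd ell0 (fullprod W) (prodTo W k.+1 H.+1 *m V *m prodTo W 0 k) = 0.
Proof.
move=> Wmin; rewrite -diff_ell_dfwith; apply: diff_local_min.
  by move=> X; rewrite ell_dfwith; exact: differentiable_mulmx_comp.
apply: (@local_min_comp _ _ _ (ell ell0) (dfwith W k)); first exact: dfwith_continuous.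
by rewrite dfwith_id.
Qed.

Lemma critical_full_rank_grad_zero W (k : 'I_H.+1) :
  critical_point (ell ell0) W ->
  row_free (prodTo W k.+1 H.+1) -> row_full (prodTo W 0 k) ->
  grad_zero ell0 (fullprod W).
Proof.
move=> Wcrit /row_freeP[Ar AAr] /row_fullP[Bl BlB] Y.
have := Wcrit k (Ar *m Y *m Bl).
by rewrite diff_ell_dfwith !mulmxA AAr mul1mx -mulmxA BlB mulmx1.
Qed.

End PartialDerivatives.

Section LocalMinFiber.
Variables (R : realType) (H : nat) (d : nat -> nat).
Variable ell0 : 'M[R]_(d H.+1, d 0) -> R.
Hypothesis ell0_diff : forall M, differentiable ell0 M.
Variable M : 'M[R]_(d H.+1, d 0).
Implicit Types W : params R H d.

Definition min_fiber W := fullprod W = M /\ local_min (ell ell0) W.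

Local Notation phi := ('d ell0 M).

Lemma min_fiber_diff W (k : 'I_H.+1) V : min_fiber W ->
  phi (prodTo W k.+1 H.+1 *m V *m prodTo W 0 k) = 0.
Proof. by case=> <-; apply: local_min_diff_ell. Qed.

Lemma min_fiber_perturb W (k : 'I_H.+1) E : min_fiber W ->
  prodTo W k.+1 H.+1 *m E *m prodTo W 0 k = 0 ->
  exists2 t : R, t != 0 & min_fiber (dfwith W k (W k + t *: E)).
Proof.
move=> [WM Wmin] AEB.
have fiberE t : fullprod (dfwith W k (W k + t *: E)) = M.
  rewrite fullprod_dfwith mulmxDr mulmxDl -scalemxAr -scalemxAl AEB.
  by rewrite scaler0 addr0 -fullprod_split.
have line_cvg : (dfwith W k (W k + t *: E) : params R H d) @[t --> (0 : R)] --> W.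
  apply: cvg_dfwith; rewrite -[X in _ --> X]addr0 -(scale0r E).
  exact: cvgD (cvg_cst _) (cvgZl (@cvg_id _ (nbhs (0 : R)))).
have Wt_min : \forall t \near (0 : R), local_min (ell ell0) (dfwith W k (W k + t *: E)).
  near=> t; rewrite /local_min.
  have -> : ell ell0 (dfwith W k (W k + t *: E)) = ell ell0 W by rewrite /ell fiberE WM.
  near: t; exact: line_cvg (near_join Wmin).
have [t [/= t0 tmin]] :=
  filter_ex (filterI (nbhs_dnbhs_neq (0 : R)) (nbhs_dnbhs Wt_min)).
by exists t => //; split.
Unshelve. all: by end_near.
Qed.

Definition vanish_right k := forall W, min_fiber W ->
  forall Z : 'M[R]_(d H.+1, d k), phi (Z *m prodTo W 0 k) = 0.

Definition vanish_left k := forall W, min_fiber W ->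
  forall Z : 'M[R]_(d k, d 0), phi (prodTo W k H.+1 *m Z) = 0.

Lemma vanish_right_H : vanish_right H.
Proof.
move=> W Wfib Z; have := min_fiber_diff (k := ord_max) Z Wfib.
by rewrite prodTo_id mul1mx.
Qed.

Lemma vanish_left_1 : vanish_left 1.
Proof.
move=> W Wfib Z; have := min_fiber_diff (k := ord0) Z Wfib.
by rewrite prodTo_id mulmx1.
Qed.

Lemma vanish_right_dir W (k : 'I_H.+1) E : min_fiber W ->
  prodTo W k.+1 H.+1 *m E *m prodTo W 0 k = 0 -> vanish_right k.+1 ->
  forall Z, phi (Z *m E *m prodTo W 0 k) = 0.
Proof.
move=> Wfib AEB IH Z; have [t t0 Wtfib] := min_fiber_perturb Wfib AEB.
have := IH _ Wtfib Z; rewrite prodTo_dfwith_lo // mulmxDl mulmxDr linearD /=.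
have := IH _ Wfib Z; rewrite prodToS // extW_ord => ->.
rewrite add0r -scalemxAl -scalemxAr linearZ /= mulmxA => /eqP.
by rewrite mulf_eq0 (negbTE t0) => /eqP.
Qed.

Lemma vanish_left_dir W (k : 'I_H.+1) E : min_fiber W ->
  prodTo W k.+1 H.+1 *m E *m prodTo W 0 k = 0 -> vanish_left k ->
  forall Z, phi (prodTo W k.+1 H.+1 *m E *m Z) = 0.
Proof.
move=> Wfib AEB IH Z; have [t t0 Wtfib] := min_fiber_perturb Wfib AEB.
have := IH _ Wtfib Z; rewrite prodTo_dfwith_hi mulmxDr mulmxDl linearD /=.
have := IH _ Wfib Z; rewrite prodToSl // extW_ord => ->.
rewrite add0r -scalemxAr -scalemxAl linearZ /= => /eqP.
by rewrite mulf_eq0 (negbTE t0) => /eqP.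
Qed.

Lemma vanish_rightS (k : 'I_H.+1) : (d H.+1 <= d k.+1)%N ->
  vanish_right k.+1 -> vanish_right k.
Proof.
move=> dk IH W Wfib; set A := prodTo W k.+1 H.+1; set B := prodTo W 0 k.
have [Afull|/right_kernel_neq0[w w0 Aw]] := boolP (row_full A).
  have /row_freeP[Ar AAr] : row_free A.
    by rewrite -row_leq_rank (leq_trans dk) ?col_leq_rank.
  by move=> Z; rewrite -[Z]mul1mx -AAr -(mulmxA A) min_fiber_diff.
suff rank1 (x : 'cV[R]_(d H.+1)) (y : 'rV[R]_(d k)) : phi (x *m y *m B) = 0.
  by move=> Z; exact: (rank1_linear_eq0 (f := phi \o mulmxr B)).
have [wl wlw] := cV_neq0_linv w0.
have AEB : A *m (w *m y) *m B = 0 by rewrite mulmxA Aw !mul0mx.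
have := vanish_right_dir Wfib AEB IH (x *m wl).
by rewrite !mulmxA -(mulmxA x) wlw mulmx1.
Qed.

Lemma vanish_leftS (k : 'I_H.+1) : (d 0 <= d k)%N ->
  vanish_left k -> vanish_left k.+1.
Proof.
move=> dk IH W Wfib; set A := prodTo W k.+1 H.+1; set B := prodTo W 0 k.
have [Bfree|/left_kernel_neq0[v v0 vB]] := boolP (row_free B).
  have /row_fullP[Bl BlB] : row_full B.
    by rewrite -col_leq_rank (leq_trans dk) ?row_leq_rank.
  by move=> Z; rewrite -[Z]mulmx1 -BlB !mulmxA -(mulmxA A) min_fiber_diff.
suff rank1 (x : 'cV[R]_(d k.+1)) (y : 'rV[R]_(d 0)) : phi (A *m (x *m y)) = 0.
  by move=> Z; exact: (rank1_linear_eq0 (f := phi \o mulmx A)).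
have [vr vvr] := rV_neq0_rinv v0.
have AEB : A *m (x *m v) *m B = 0 by rewrite -!mulmxA vB !mulmx0.
have := vanish_left_dir Wfib AEB IH (vr *m y).
by rewrite -!mulmxA (mulmxA v) vvr mul1mx.
Qed.

Lemma vanish_right_0 : (forall j, (1 <= j <= H)%N -> (d H.+1 <= d j)%N) ->
  vanish_right 0.
Proof.
move=> dmin; suff: forall n, (n <= H)%N -> vanish_right (H - n).
  by move/(_ H (leqnn H)); rewrite subnn.
elim=> [|n IH] nH; first by rewrite subn0; exact: vanish_right_H.
have kH : (H - n.+1 < H.+1)%N by rewrite ltnS leq_subr.
apply: (@vanish_rightS (Ordinal kH)); rewrite /= subnSK //; last exact: IH (ltnW nH).
by apply: dmin; rewrite subn_gt0 nH leq_subr.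
Qed.

Lemma vanish_left_top : (forall j, (1 <= j <= H)%N -> (d 0 <= d j)%N) ->
  vanish_left H.+1.
Proof.
move=> dmin; suff: forall k, (k <= H)%N -> vanish_left k.+1 by apply.
elim=> [|k IH] kH; first exact: vanish_left_1.
apply: (@vanish_leftS (Ordinal (kH : k.+1 < H.+1)%N)); last exact: IH (ltnW kH).
by apply: dmin; rewrite kH.
Qed.

End LocalMinFiber.

Lemma local_min_grad_zero (R : realType) (H : nat) (d : nat -> nat)
    (ell0 : 'M[R]_(d H.+1, d 0) -> R) (W : params R H d) :
  (forall M, differentiable ell0 M) ->
  (forall j, (1 <= j <= H)%N -> (minn (d 0) (d H.+1) <= d j)%N) ->
  local_min (ell ell0) W -> grad_zero ell0 (fullprod W).
Proof.
move=> ell0_diff dmin Wmin V; have Wfib : min_fiber ell0 (fullprod W) W by [].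
have [dyx|dxy] := leqP (d H.+1) (d 0).
  have := vanish_right_0 ell0_diff _ Wfib V; rewrite prodTo_id mulmx1; apply.
  by move=> j /dmin; rewrite (minn_idPr dyx).
have := vanish_left_top ell0_diff _ Wfib V; rewrite prodTo_id mul1mx; apply.
by move=> j /dmin; rewrite (minn_idPl (ltnW dxy)).
Qed.

Lemma local_max_grad_zero (R : realType) (H : nat) (d : nat -> nat)
    (ell0 : 'M[R]_(d H.+1, d 0) -> R) (W : params R H d) :
  (forall M, differentiable ell0 M) ->
  (forall j, (1 <= j <= H)%N -> (minn (d 0) (d H.+1) <= d j)%N) ->
  local_max (ell ell0) W -> grad_zero ell0 (fullprod W).
Proof.
move=> ell0_diff dmin Wmax V.
have Wmin : local_min (ell (- ell0)) W.
  by apply: filterS Wmax => Y; rewrite /ell /= lerN2.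
have := local_min_grad_zero (fun M => differentiableN (ell0_diff M)) dmin Wmin V.
by rewrite diffN //= => /eqP; rewrite oppr_eq0 => /eqP.
Qed.

Section Fullprod.
Variables (R : realType) (H : nat) (d : nat -> nat).
Implicit Types W : params R H d.

Lemma prodTo_pid W j i r : (j < i)%N ->
  (forall k, (j <= k < i)%N -> extW W k = pid_mx r) ->
  (forall k, (j < k < i)%N -> (r <= d k)%N) ->
  prodTo W j i = pid_mx r.
Proof.
elim: i => // i IH; rewrite ltnS leq_eqVlt => /predU1P[<-|ji] Wpid rd.
  by rewrite prodToS // prodTo_id mulmx1 Wpid // leqnn ltnSn.
have ji' := ltnW ji.
rewrite prodToS // Wpid ?ji' ?ltnSn // IH // => [|k /andP[jk ki]|k /andP[jk ki]].
- by rewrite mul_pid_mx minnn (minn_idPr (rd i _)) // ji ltnSn.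
- by rewrite Wpid // jk ltnW.
- by rewrite rd // jk ltnW.
Qed.

Lemma fullprod_surj : (1 <= H)%N ->
  (forall j, (1 <= j <= H)%N -> (minn (d 0) (d H.+1) <= d j)%N) ->
  forall N, exists W, fullprod W = N.
Proof.
move=> H1 dmin N; have [dyx|dxy] := leqP (d H.+1) (d 0).
  have dymin j : (1 <= j <= H)%N -> (d H.+1 <= d j)%N.
    by move/dmin; rewrite (minn_idPr dyx).
  pose P : params R H d := fun=> pid_mx (d H.+1).
  exists (dfwith P ord0 (pid_mx (d H.+1) *m N)).
  rewrite fullprod_dfwith prodTo_id mulmx1 (@prodTo_pid _ 1 _ (d H.+1)) //.
  - by rewrite mulmxA mul_pid_mx minnn (minn_idPr (dymin 1 H1)) pid_mx_1 mul1mx.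
  - by move=> k /andP[_ kH]; rewrite extW_lt.
  - by move=> k /andP[k1 kH]; rewrite dymin // ltnW.
have dxmin j : (1 <= j <= H)%N -> (d 0 <= d j)%N.
  by move/dmin; rewrite (minn_idPl (ltnW dxy)).
pose P : params R H d := fun=> pid_mx (d 0).
exists (dfwith P ord_max (N *m pid_mx (d 0))).
rewrite fullprod_dfwith prodTo_id mul1mx (@prodTo_pid _ 0 _ (d 0)) //.
- by rewrite -mulmxA mul_pid_mx minnn (minn_idPr (dxmin H _)) ?H1 ?leqnn // pid_mx_1 mulmx1.
- by move=> k /andP[_ kH]; rewrite extW_lt // ltnW.
- by move=> k /andP[k0 kH]; rewrite dxmin // k0 ltnW.
Qed.

Lemma fullprod_section W (k : 'I_H.+1) :
  row_free (prodTo W k.+1 H.+1) -> row_full (prodTo W 0 k) ->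
  exists g : 'M[R]_(d H.+1, d 0) -> params R H d,
    (forall N, fullprod (g N) = N) /\ g N @[N --> fullprod W] --> W.
Proof.
case/row_freeP=> Ar AAr /row_fullP[Bl BlB].
pose g N := W k + Ar *m (N - fullprod W) *m Bl.
exists (fun N => dfwith W k (g N)); split.
  move=> N; rewrite fullprod_dfwith mulmxDr mulmxDl -fullprod_split.
  by rewrite !mulmxA AAr mul1mx -mulmxA BlB mulmx1 addrC subrK.
have g_cvg : g N @[N --> fullprod W] --> W k.
  have lin_cont : {for fullprod W,
    continuous (fun N : 'M[R]_(d H.+1, d 0) => Ar *m (N - fullprod W) *m Bl)}.
    apply: mulmx_continuous_at; last exact: cst_continuous.
    apply: mulmx_continuous_at; first exact: cst_continuous.
    exact: cvgB cvg_id (cvg_cst _).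
  apply: cvg_trans (cvgD (cvg_cst (W k)) lin_cont) _.
  by rewrite subrr mulmx0 mul0mx addr0.
exact: cvg_dfwith g_cvg.
Qed.

Lemma near_fullprod W (k : 'I_H.+1) (P : 'M[R]_(d H.+1, d 0) -> Prop) :
  row_free (prodTo W k.+1 H.+1) -> row_full (prodTo W 0 k) ->
  (\forall V \near W, P (fullprod V)) -> \forall N \near fullprod W, P N.
Proof.
move=> Afree Bfull; have [g [gK g_cvg]] := fullprod_section Afree Bfull.
move=> PV; near=> N; rewrite -(gK N); near: N; exact: g_cvg PV.
Unshelve. all: by end_near.
Qed.

End Fullprod.

Theorem theorem3 (R : realType) (H : nat) (d : nat -> nat)
  (hH : (1 <= H)%N)
  (hd : forall j : nat, (1 <= j <= H)%N -> (minn (d 0%N) (d H.+1) <= d j)%N)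
  (ell0 : 'M[R]_(d H.+1, d 0%N) -> R)
  (hdiff : forall M : 'M[R]_(d H.+1, d 0%N), differentiable ell0 M)
  (What : params R H d)
  (hcrit : critical_point (ell ell0) What) :
  (* 1. *)
  (~ grad_zero ell0 (fullprod What) -> saddle_point (ell ell0) What) /\
  (* 2. *)
  (grad_zero ell0 (fullprod What) ->
     ((local_min ell0 (fullprod What) -> local_min (ell ell0) What) /\
      (local_max ell0 (fullprod What) -> local_max (ell ell0) What)) /\
     ((global_min (ell ell0) What <-> global_min ell0 (fullprod What)) /\
      (global_max (ell ell0) What <-> global_max ell0 (fullprod What)))) /\
  (* 3. *)
  ((exists js : nat, (1 <= js <= H.+1)%N /\
       \rank (prodTo What js H.+1) = d H.+1 /\
       \rank (prodTo What 0 js.-1) = d 0%N) ->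
     grad_zero ell0 (fullprod What) /\
     (local_min (ell ell0) What -> local_min ell0 (fullprod What)) /\
     (local_max (ell ell0) What -> local_max ell0 (fullprod What))).
Proof.
split; [|split].
- move=> ngrad; split=> //; split=> [Wmin | Wmax]; apply: ngrad.
  + exact: local_min_grad_zero Wmin.
  + exact: local_max_grad_zero Wmax.
- have fullprod_cont := @prodTo_continuous R H d 0 H.+1 What.
  have onto := fullprod_surj (R := R) hH hd.
  move=> _; split; split.
  + exact: fullprod_cont.
  + exact: fullprod_cont.
  + by split=> [Wmin N | Mmin W]; [have [W <-] := onto N; exact: Wmin | exact: Mmin].
  + by split=> [Wmax N | Mmax W]; [have [W <-] := onto N; exact: Wmax | exact: Mmax].
- case=> -[|k] [] //= kH [/eqP Afree /eqP Bfull].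
  split; first exact: (critical_full_rank_grad_zero hdiff (k := Ordinal kH)).
  by split; exact: (near_fullprod (k := Ordinal kH)).
Qed.
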